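(* In the calculus $\lambda^{RE}$ described in the context: if $e_1\to^*e_1'$ and $e_2\to^*e_2'$, then $\delta\vdash e_1'\approx e_2':\tau$ if and only if $\delta\vdash e_1\approx e_2:\tau$.
   Context: Syntax of $\lambda^{RE}$. Basic types $b ::= \mathsf{Bool}\mid\mathsf{Unit}$. Constants $c ::= \mathsf{true}\mid\mathsf{false}\mid\mathsf{unit}\mid (=_b)\mid (=_{(c,b)})$. Expressions $e ::= c\mid x\mid e\ e\mid \lambda x{:}\tau.\,e\mid \mathsf{BEq}_b\ e\ e\ e\mid \mathsf{XEq}_{x:\tau\to\tau}\ e\ e\ e$. Values $v ::= c\mid \lambda x{:}\tau.\,e\mid \mathsf{BEq}_b\ e\ e\ v\mid \mathsf{XEq}_{x:\tau\to\tau}\ e\ e\ v$. Types $\tau ::= \{x{:}b\mid e\}\mid x{:}\tau\to\tau\mid \mathsf{PEq}_{\tau}\{e\}\{e\}$. $e[x:=e']$ is capture-avoiding substitution. Reduction: evaluation contexts $E ::= \bullet\mid E\ e\mid v\ E\mid \mathsf{BEq}_b\ e\ e\ E\mid\mathsf{XEq}_{x:\tau\to\tau}\ e\ e\ E$; $E[e]\to E[e']$ if $e\to e'$; $(\lambda x{:}\tau.\,e)\ v\to e[x:=v]$; $(=_b)\ c_1\to(=_{(c_1,b)})$; $(=_{(c_1,b)})\ c_2\to\mathsf{true}$ if $c_1,c_2$ syntactically equal, else $\to\mathsf{false}$. $\to^*$ is the reflexive–transitive closure. Equivalence logical relation. A pending substitution $\delta$ maps variables to pairs of closed values; $\delta_1,\delta_2$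 are its component substitutions, and $\delta,(v_1,v_2)/x$ extends it. Value relation $\delta\vdash v_1\approx_{val}v_2:\tau$: for $\{x{:}b\mid r\}$: $v_1=v_2=c$ with $c$ a constant of simple type $b$, $\delta_1(r[x:=c])\to^*\mathsf{true}$ and $\delta_2(r[x:=c])\to^*\mathsf{true}$; for $x{:}\tau_x\to\tau$: for all $v_3,v_4$ with $\delta\vdash v_3\approx_{val}v_4:\tau_x$, $\delta,(v_3,v_4)/x\vdash v_1\ v_3\approx v_2\ v_4:\tau$; for $\mathsf{PEq}_\tau\{e_l\}\{e_r\}$: $\delta\vdash\delta_1(e_l)\approx\delta_2(e_r):\tau$. Expression relation: $\delta\vdash e_1\approx e_2:\tau$ iff $e_1\to^*v_1$, $e_2\to^*v_2$ for some values and $\delta\vdash v_1\approx_{val}v_2:\tau$. *)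

From Stdlib Require Import Arith List.
Import ListNotations.

Inductive basic : Type := BBool | BUnit.

Inductive const : Type :=
| CTrue | CFalse | CUnit
| CEqb (b : basic)
| CEqcb (c : const) (b : basic).

(* Variables are de Bruijn indices.
   - ELam t e          : \x:t. e           (x = index 0 in e)
   - EBEq b e1 e2 e3   : BEq_b e1 e2 e3
   - EXEq tx t e1 e2 e3: XEq_{x:tx -> t} e1 e2 e3  (x = index 0 in t)
   - TRef b r          : {x:b | r}         (x = index 0 in r)
   - TArr tx t         : x:tx -> t         (x = index 0 in t)
   - TPEq t el er      : PEq_t {el} {er} *)
Inductive expr : Type :=
| EConst (c : const)
| EVar (n : nat)
| EApp (e1 e2 : expr)
| ELam (t : ty) (e : expr)
| EBEq (b : basic) (e1 e2 e3 : expr)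
| EXEq (tx t : ty) (e1 e2 e3 : expr)
with ty : Type :=
| TRef (b : basic) (r : expr)
| TArr (tx t : ty)
| TPEq (t : ty) (el er : expr).

Fixpoint lift_e (d k : nat) (e : expr) : expr :=
  match e with
  | EConst c => EConst c
  | EVar n => if Nat.ltb n k then EVar n else EVar (n + d)
  | EApp e1 e2 => EApp (lift_e d k e1) (lift_e d k e2)
  | ELam t e => ELam (lift_t d k t) (lift_e d (S k) e)
  | EBEq b e1 e2 e3 => EBEq b (lift_e d k e1) (lift_e d k e2) (lift_e d k e3)
  | EXEq tx t e1 e2 e3 =>
      EXEq (lift_t d k tx) (lift_t d (S k) t) (lift_e d k e1) (lift_e d k e2) (lift_e d k e3)
  end
with lift_t (d k : nat) (t : ty) : ty :=
  match t with
  | TRef b r => TRef b (lift_e d (S k) r)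
  | TArr tx t => TArr (lift_t d k tx) (lift_t d (S k) t)
  | TPEq t el er => TPEq (lift_t d k t) (lift_e d k el) (lift_e d k er)
  end.

(* capture-avoiding substitution of u for variable k (variables above k
   are decremented, since the binder of k disappears) *)
Fixpoint subst_e (k : nat) (u : expr) (e : expr) : expr :=
  match e with
  | EConst c => EConst c
  | EVar n =>
      if Nat.ltb n k then EVar n
      else if Nat.eqb n k then lift_e k 0 u
      else EVar (pred n)
  | EApp e1 e2 => EApp (subst_e k u e1) (subst_e k u e2)
  | ELam t e => ELam (subst_t k u t) (subst_e (S k) u e)
  | EBEq b e1 e2 e3 => EBEq b (subst_e k u e1) (subst_e k u e2) (subst_e k u e3)
  | EXEq tx t e1 e2 e3 =>
      EXEq (subst_t k u tx) (subst_t (S k) u t) (subst_e k u e1) (subst_e k u e2) (subst_e k u e3)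
  end
with subst_t (k : nat) (u : expr) (t : ty) : ty :=
  match t with
  | TRef b r => TRef b (subst_e (S k) u r)
  | TArr tx t => TArr (subst_t k u tx) (subst_t (S k) u t)
  | TPEq t el er => TPEq (subst_t k u t) (subst_e k u el) (subst_e k u er)
  end.

Definition subst0 (u e : expr) : expr := subst_e 0 u e.

Fixpoint wf_e (n : nat) (e : expr) : Prop :=
  match e with
  | EConst _ => True
  | EVar m => m < n
  | EApp e1 e2 => wf_e n e1 /\ wf_e n e2
  | ELam t e => wf_t n t /\ wf_e (S n) e
  | EBEq _ e1 e2 e3 => wf_e n e1 /\ wf_e n e2 /\ wf_e n e3
  | EXEq tx t e1 e2 e3 => wf_t n tx /\ wf_t (S n) t /\ wf_e n e1 /\ wf_e n e2 /\ wf_e n e3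
  end
with wf_t (n : nat) (t : ty) : Prop :=
  match t with
  | TRef _ r => wf_e (S n) r
  | TArr tx t => wf_t n tx /\ wf_t (S n) t
  | TPEq t el er => wf_t n t /\ wf_e n el /\ wf_e n er
  end.

Definition closed (e : expr) : Prop := wf_e 0 e.

Inductive is_value : expr -> Prop :=
| VConst c : is_value (EConst c)
| VLam t e : is_value (ELam t e)
| VBEq b e1 e2 v : is_value v -> is_value (EBEq b e1 e2 v)
| VXEq tx t e1 e2 v : is_value v -> is_value (EXEq tx t e1 e2 v).

(* small-step reduction; the congruence rules implement the evaluation
   contexts E ::= . | E e | v E | BEq_b e e E | XEq e e E *)
Inductive step : expr -> expr -> Prop :=
| S_AppL e1 e1' e2 : step e1 e1' -> step (EApp e1 e2) (EApp e1' e2)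
| S_AppR v e e' : is_value v -> step e e' -> step (EApp v e) (EApp v e')
| S_BEq b e1 e2 e e' : step e e' -> step (EBEq b e1 e2 e) (EBEq b e1 e2 e')
| S_XEq tx t e1 e2 e e' : step e e' -> step (EXEq tx t e1 e2 e) (EXEq tx t e1 e2 e')
| S_Beta t e v : is_value v -> step (EApp (ELam t e) v) (subst0 v e)
| S_Eq1 b c1 : step (EApp (EConst (CEqb b)) (EConst c1)) (EConst (CEqcb c1 b))
| S_Eq2T c1 b c2 : c1 = c2 ->
    step (EApp (EConst (CEqcb c1 b)) (EConst c2)) (EConst CTrue)
| S_Eq2F c1 b c2 : c1 <> c2 ->
    step (EApp (EConst (CEqcb c1 b)) (EConst c2)) (EConst CFalse).

Inductive steps : expr -> expr -> Prop :=
| steps_refl e : steps e e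
| steps_step e1 e2 e3 : step e1 e2 -> steps e2 e3 -> steps e1 e3.

Definition const_of_basic (c : const) (b : basic) : Prop :=
  match c, b with
  | CTrue, BBool | CFalse, BBool | CUnit, BUnit => True
  | _, _ => False
  end.

(* pending substitutions: the head of the list is the innermost variable *)
Definition pending_subst := list (expr * expr).
Definition delta1 (d : pending_subst) : list expr := map fst d.
Definition delta2 (d : pending_subst) : list expr := map snd d.

(* applying a (closing) substitution: the i-th value replaces index i *)
Fixpoint msubst (vs : list expr) (e : expr) : expr :=
  match vs with
  | [] => e
  | v :: vs' => msubst vs' (subst0 v e)
  end.

Definition is_pending (d : pending_subst) : Prop :=
  Forall (fun p => is_value (fst p) /\ closed (fst p) /\
                   is_value (snd p) /\ closed (snd p)) d.

Definition exprrel_with (R : expr -> expr -> Prop) (e1 e2 : expr) : Prop :=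
  exists v1 v2, steps e1 v1 /\ is_value v1 /\ steps e2 v2 /\ is_value v2 /\ R v1 v2.

Fixpoint valrel (d : pending_subst) (v1 v2 : expr) (t : ty) {struct t} : Prop :=
  match t with
  | TRef b r =>
      exists c, v1 = EConst c /\ v2 = EConst c /\ const_of_basic c b /\
        steps (msubst (delta1 d) (subst0 (EConst c) r)) (EConst CTrue) /\
        steps (msubst (delta2 d) (subst0 (EConst c) r)) (EConst CTrue)
  | TArr tx t' =>
      forall v3 v4, is_value v3 -> closed v3 -> is_value v4 -> closed v4 ->
        valrel d v3 v4 tx ->
        exprrel_with (fun w1 w2 => valrel ((v3, v4) :: d) w1 w2 t')
                     (EApp v1 v3) (EApp v2 v4)
  | TPEq t' el er =>
      exprrel_with (fun w1 w2 => valrel d w1 w2 t')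
                   (msubst (delta1 d) el) (msubst (delta2 d) er)
  end.

Definition exprrel (d : pending_subst) (e1 e2 : expr) (t : ty) : Prop :=
  exprrel_with (fun v1 v2 => valrel d v1 v2 t) e1 e2.

(* Reduction is deterministic and values are irreducible, so any reduct of
   an expression lies on the unique path to its value; hence reducing either
   side changes neither whether a value is reached nor which one. *)

Lemma value_irreducible v e : is_value v -> ~ step v e.
Proof.
  intros Hv; revert e; induction Hv; intros e' Hs; inversion Hs; subst;
    eapply IHHv; eauto.
Qed.

Lemma step_deterministic e e1 e2 : step e e1 -> step e e2 -> e1 = e2.
Proof.
  intros H1; revert e2; induction H1; intros e2' H2; inversion H2; subst;
    try congruence; try (f_equal; auto; fail);
    exfalso; match goal with
             | Hs : step ?v _ |- _ =>
                 solve [eapply (value_irreducible v); eauto using is_value]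
             end.
Qed.

Lemma steps_trans e1 e2 e3 : steps e1 e2 -> steps e2 e3 -> steps e1 e3.
Proof. induction 1; eauto using steps. Qed.

Lemma steps_to_value_from_reduct e e' v :
  steps e e' -> steps e v -> is_value v -> steps e' v.
Proof.
  intros He'; revert v; induction He' as [|e1 e2 e3 H12 _ IH]; intros v Hv Vv;
    auto.
  apply IH; auto.
  inversion Hv as [|? e2' ? H12' Hv']; subst.
  - exfalso; eapply value_irreducible; eauto.
  - now rewrite (step_deterministic _ _ _ H12 H12').
Qed.

Lemma exprrel_with_steps (R : expr -> expr -> Prop) e1 e1' e2 e2' :
  steps e1 e1' -> steps e2 e2' ->
  exprrel_with R e1' e2' <-> exprrel_with R e1 e2.
Proof.
  intros H1 H2; unfold exprrel_with; split;
    intros (v1 & v2 & S1 & V1 & S2 & V2 & Rv); exists v1, v2;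
    repeat split; eauto using steps_trans, steps_to_value_from_reduct.
Qed.

Theorem lemmaB19 (d : pending_subst) (t : ty) (e1 e1' e2 e2' : expr) :
  is_pending d ->
  steps e1 e1' -> steps e2 e2' ->
  (exprrel d e1' e2' t <-> exprrel d e1 e2 t).
Proof.
  intros _; apply exprrel_with_steps.
Qed.
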